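(* For every integer $k\ge 2$, the $k$-equal-representation shortlisting rule is non-wasteful. For every integer $k\ge 1$, the $k$-equal-representation shortlisting rule is representatively efficient.
   Context: Let $\mathbb{P}=\{p_1,\dots,p_m\}$ be a finite set of projects, $c:\mathbb{P}\to\mathbb{N}$ a cost function with $c(P)=\sum_{p\in P}c(p)$, and $B\in\mathbb{N}$ a budget limit with $c(p)\le B$ for all $p$. A shortlisting instance is $I=\langle\mathbb{P},c,B\rangle$. The agents are $\mathcal{N}=\{1,\dots,n\}$; a shortlisting profile is $\boldsymbol{P}=(P_1,\dots,P_n)$ with $P_i\subseteq\mathbb{P}$, and $\bigcup\boldsymbol{P}=P_1\cup\dots\cup P_n$. A shortlisting rule $R$ maps each $(I,\boldsymbol{P})$ to $R(I,\boldsymbol{P})\subseteq\bigcup\boldsymbol{P}$. Tie-breaking: for a nonempty family $\mathfrak{P}$ of subsets of $\mathbb{P}$, $T(\mathfrak{P})$ is the unique $P\in\mathfrak{P}$ such that for every $P'\in\mathfrak{P}\setminus\{P\}$ the lowest-index project of $(P\setminus P')\cup(P'\setminus P)$ belongs to $P$. The $k$-equal-representation shortlisting rule returns $$R(I,\boldsymbol{P})=T\Big(\operatorname*{argmax}_{P\subseteq\bigcup\boldsymbol{P},\ c(P)\le kB}\ \sum_{i\in\mathcal{N}}\sum_{\ell=0}^{|P_i\cap P|}\frac{1}{n^{\ell}}\Big).$$ $R$ is non-wasteful if for every $I$ and $\boldsymbol{P}$, either $c(R(I,\boldsymbol{P}))\ge B$ or $R(I,\boldsymbol{P})=\bigcup\boldsymbol{P}$.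 A set $\mathcal{P}\subseteq\mathbb{P}$ is representatively dominated (for $I,\boldsymbol{P}$) if there is $\mathcal{P}'\subseteq\mathbb{P}$ with $c(\mathcal{P}')\le c(\mathcal{P})$ and $|\mathcal{P}'\cap P_i|\ge|\mathcal{P}\cap P_i|$ for all $i$, strictly for at least one $i$; $R$ is representatively efficient if its output is never representatively dominated. *)

From HB Require Import structures.
From mathcomp Require Import all_boot all_order all_algebra.
Set Implicit Arguments. Unset Strict Implicit. Unset Printing Implicit Defensive.
Import Order.TTheory GRing.Theory Num.Theory.

(* Projects are 'I_m = {p_1,...,p_m} (index order = project index order). *)

Definition cost (m : nat) (c : 'I_m -> nat) (P : {set 'I_m}) : nat :=
  \sum_(p in P) c p.

Definition profile_union (m n : nat) (prof : 'I_n -> {set 'I_m}) : {set 'I_m} :=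
  \bigcup_(i < n) prof i.

Definition shortlisting_rule : Type :=
  forall (m : nat) (c : 'I_m -> nat) (B : nat) (n : nat),
    ('I_n -> {set 'I_m}) -> {set 'I_m}.

(* "the lowest-index project of (P \ P') u (P' \ P) belongs to P"
   (for P <> P'): the first index where P and P' differ is in P. *)
Definition lowest_diff_in (m : nat) (P P' : {set 'I_m}) : bool :=
  [exists j : 'I_m, [&& j \in P, j \notin P' &
     [forall i : 'I_m, (i < j)%N ==> ((i \in P) == (i \in P'))]]].

Definition tie_break (m : nat) (F : {set {set 'I_m}}) : {set 'I_m} :=
  odflt set0 [pick P in F |
    [forall P' in F, (P' != P) ==> lowest_diff_in P P']].

Definition er_score (m n : nat) (prof : 'I_n -> {set 'I_m}) (P : {set 'I_m})
  : rat :=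
  (\sum_(i < n) \sum_(l < #|prof i :&: P|.+1) ((n%:R)^-1) ^+ l)%R.

Definition er_feasible (k m : nat) (c : 'I_m -> nat) (B n : nat)
  (prof : 'I_n -> {set 'I_m}) : {set {set 'I_m}} :=
  [set P : {set 'I_m} | (P \subset profile_union prof) && (cost c P <= k * B)].

Definition er_argmax (k m : nat) (c : 'I_m -> nat) (B n : nat)
  (prof : 'I_n -> {set 'I_m}) : {set {set 'I_m}} :=
  [set P in er_feasible k c B prof |
    [forall Q in er_feasible k c B prof, (er_score prof Q <= er_score prof P)%R]].

Definition k_equal_representation (k : nat) : shortlisting_rule :=
  fun m c B n prof => tie_break (er_argmax k c B prof).

Definition non_wasteful (R : shortlisting_rule) : Prop :=
  forall (m : nat) (c : 'I_m -> nat) (B : nat),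
    (forall p, c p <= B) ->
    forall (n : nat) (prof : 'I_n -> {set 'I_m}),
      B <= cost c (R m c B n prof) \/ R m c B n prof = profile_union prof.

Definition representatively_dominated (m : nat) (c : 'I_m -> nat) (n : nat)
  (prof : 'I_n -> {set 'I_m}) (P : {set 'I_m}) : Prop :=
  exists P' : {set 'I_m},
    cost c P' <= cost c P /\
    (forall i : 'I_n, #|P :&: prof i| <= #|P' :&: prof i|) /\
    (exists i : 'I_n, #|P :&: prof i| < #|P' :&: prof i|).

Definition representatively_efficient (R : shortlisting_rule) : Prop :=
  forall (m : nat) (c : 'I_m -> nat) (B : nat),
    (forall p, c p <= B) ->
    forall (n : nat) (prof : 'I_n -> {set 'I_m}),
      ~ representatively_dominated c prof (R m c B n prof).

From mathcomp Require Import all_boot all_order all_algebra.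
Import Order.TTheory GRing.Theory Num.Theory.

(* The rule returns a score maximiser among the feasible shortlists, and the
   score is strictly increasing in every agent's number of shortlisted
   approved projects, since the l-th such project adds the positive term
   n^-l. A set that representatively dominates the output, cut down to the
   approved projects, is feasible and scores strictly more, which is absurd.
   If the output costs less than B but misses an approved project p, adding p
   costs at most B more, so stays within 2B <= kB, and raises the score.
   Tie-breaking is well defined because "the first index where P and P'
   differ lies in P" is the strict part of a total lexicographic order. *)

Section TieBreak.

Context {m : nat} {F : {set {set 'I_m}}}.
Hypothesis F_neq0 : F != set0.

Lemma lex_top_subfamily {j} : j <= m ->
  exists2 G : {set {set 'I_m}}, G \subset F /\ G != set0 &
    (forall P Q (i : 'I_m), P \in G -> Q \in G -> i < j -> (i \in P) = (i \in Q))
    /\ (forall P P', P \in G -> P' \in F -> P' \notin G -> lowest_diff_in P P').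
Proof.
elim: j => [_|j IHj lt_jm]; first by exists F; split=> // P P' _ ->.
have [G [sGF G_neq0] [G_agree G_top]] := IHj (ltnW lt_jm).
pose jo : 'I_m := Ordinal lt_jm.
have below_jS (i : 'I_m) : i < j.+1 -> i < j \/ i = jo.
  by rewrite ltnS leq_eqVlt => /orP[/eqP eq_ij|]; [right; exact: val_inj|left].
have [/exists_inP[P0 P0G P0jo]|no_jo] := boolP [exists P in G, jo \in P].
- exists [set P in G | jo \in P]; split.
  + by apply: subset_trans sGF; apply/subsetP => P; rewrite inE => /andP[].
  + by apply/set0Pn; exists P0; rewrite inE P0G.
  + move=> P Q i; rewrite !inE => /andP[PG Pjo] /andP[QG Qjo].
    by case/below_jS => [|->]; [exact: G_agree|rewrite Pjo Qjo].
  + move=> P P'; rewrite !inE => /andP[PG Pjo] P'F.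
    have [P'G /= P'jo|P'G _] := boolP (P' \in G); last exact: G_top.
    apply/existsP; exists jo; rewrite Pjo P'jo /=.
    by apply/forallP => i; apply/implyP => lt_ij; rewrite (G_agree P P').
- exists G; split=> // P Q i PG QG; case/below_jS => [|->]; first exact: G_agree.
  have notin_jo R : R \in G -> (jo \in R) = false.
    move=> RG; apply: negbTE; apply: contra no_jo => Rjo.
    by apply/exists_inP; exists R.
  by rewrite !notin_jo.
Qed.

Lemma tie_break_in : tie_break F \in F.
Proof.
rewrite /tie_break; case: pickP => [P /andP[] //|no_winner].
have [G [sGF /set0Pn[P PG]] [G_agree G_top]] := lex_top_subfamily (leqnn m).
have /negP[] := negbT (no_winner P); rewrite (subsetP sGF _ PG) /=.
apply/forall_inP => P' P'F; apply/implyP => neq_P'P.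
have [P'G|] := boolP (P' \in G); last exact: G_top.
by case/eqP: neq_P'P; apply/setP => i; rewrite (G_agree P' P).
Qed.

End TieBreak.

Definition partial_geom {R : numDomainType} (x : R) (a : nat) : R :=
  (\sum_(l < a.+1) x ^+ l)%R.

Lemma partial_geom_lt {R : numDomainType} (x : R) : (0 < x)%R ->
  {homo partial_geom x : a b / a < b >-> (a < b)%R}.
Proof.
move=> x_gt0; apply: homo_ltn => [y a b|a]; first exact: lt_trans.
by rewrite /partial_geom [in X in (_ < X)%R]big_ord_recr ltrDl exprn_gt0.
Qed.

Lemma partial_geom_le {R : numDomainType} (x : R) : (0 < x)%R ->
  {homo partial_geom x : a b / a <= b >-> (a <= b)%R}.
Proof.
move=> x_gt0 a b; rewrite leq_eqVlt => /orP[/eqP -> //|lt_ab].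
exact/ltW/partial_geom_lt.
Qed.

Lemma er_score_lt {m n} (prof : 'I_n -> {set 'I_m}) (P Q : {set 'I_m}) :
  (forall i, #|P :&: prof i| <= #|Q :&: prof i|) ->
  (exists i, #|P :&: prof i| < #|Q :&: prof i|) ->
  (er_score prof P < er_score prof Q)%R.
Proof.
move=> le_PQ [i0 lt_PQ].
have inv_n_gt0 : (0 < (n%:R : rat)^-1)%R.
  by rewrite invr_gt0 ltr0n (leq_trans _ (ltn_ord i0)).
rewrite /er_score (bigD1 i0) //= [X in (_ < X)%R](bigD1 i0) //=.
apply: ltr_leD; first by rewrite ![prof i0 :&: _]setIC partial_geom_lt.
by apply: ler_sum => i _; rewrite ![prof i :&: _]setIC partial_geom_le.
Qed.

Lemma cost_subset {m} (c : 'I_m -> nat) {P Q : {set 'I_m}} :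
  P \subset Q -> cost c P <= cost c Q.
Proof.
move=> /subsetP sPQ.
exact: (sub_le_big (op := addn) leqnn (fun x y => leq_addr y x)).
Qed.

Section Winner.

Context (k : nat) {m : nat} (c : 'I_m -> nat) (B : nat).
Context {n : nat} (prof : 'I_n -> {set 'I_m}).

Let winner := k_equal_representation k c B prof.

Lemma er_argmax_neq0 : er_argmax k c B prof != set0.
Proof.
have set0_feasible : set0 \in er_feasible k c B prof.
  by rewrite inE sub0set /cost big_set0.
case: (arg_maxP (er_score prof) set0_feasible) => P P_feasible P_max.
apply/set0Pn; exists P; rewrite in_set; apply/andP; split.
  exact: P_feasible.
by apply/forall_inP; exact: P_max.
Qed.

Lemma winner_feasible :
  winner \subset profile_union prof /\ cost c winner <= k * B.
Proof.
have := tie_break_in er_argmax_neq0.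
by rewrite inE => /andP[]; rewrite inE => /andP[].
Qed.

Lemma winner_max {Q : {set 'I_m}} :
  Q \subset profile_union prof -> cost c Q <= k * B ->
  (er_score prof Q <= er_score prof winner)%R.
Proof.
move=> sQU Q_cost; have := tie_break_in er_argmax_neq0.
by rewrite inE => /andP[_ /forall_inP]; apply; rewrite inE sQU.
Qed.

End Winner.

Lemma k_equal_representation_non_wasteful k :
  2 <= k -> non_wasteful (k_equal_representation k).
Proof.
move=> k_ge2 m c B c_le_B n prof; set W := k_equal_representation _ _ _ _.
have [sWU W_cost] := winner_feasible k c B prof.
have [|W_cheap] := leqP B (cost c W); [by left|right].
apply/eqP; rewrite eqEsubset sWU /=; apply/subsetP => p pU.
apply/negPn/negP => pW.
have /bigcupP[i _ p_i] := pU.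
have pW_cost : cost c (p |: W) <= k * B.
  rewrite /cost big_setU1 //= (leq_trans (leq_add (c_le_B p) (ltnW W_cheap))) //.
  by rewrite addnn -mul2n leq_mul2r k_ge2 orbT.
have pWU : p |: W \subset profile_union prof by rewrite subUset sub1set pU sWU.
have sW_pW : W \subset p |: W by apply: subsetUr.
have := winner_max k c B prof pWU pW_cost.
apply/negP; rewrite -ltNge; apply: er_score_lt => [j|].
  exact/subset_leq_card/setSI.
exists i; apply: proper_card; rewrite properEneq (setSI _ sW_pW) andbT.
by apply/eqP => /setP/(_ p); rewrite !inE eqxx p_i (negbTE pW).
Qed.

Lemma k_equal_representation_representatively_efficient k :
  representatively_efficient (k_equal_representation k).
Proof.
move=> m c B _ n prof [P [P_cost [le_WP lt_WP]]].
set W := k_equal_representation _ _ _ _ in P_cost le_WP lt_WP.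
have [_ W_cost] := winner_feasible k c B prof.
pose PU := P :&: profile_union prof.
have PU_prof i : PU :&: prof i = P :&: prof i.
  by rewrite -setIA (setIidPr (bigcup_max i isT (subxx _))).
have PU_cost : cost c PU <= k * B.
  by rewrite (leq_trans (cost_subset c (subsetIl _ _))) // (leq_trans P_cost).
have := winner_max k c B prof (subsetIr _ _) PU_cost.
apply/negP; rewrite -ltNge; apply: er_score_lt => [i|]; first by rewrite PU_prof.
by have [i lt_i] := lt_WP; exists i; rewrite PU_prof.
Qed.

Theorem proposition2 :
  (forall k : nat, 2 <= k -> non_wasteful (k_equal_representation k)) /\
  (forall k : nat, 1 <= k -> representatively_efficient (k_equal_representation k)).
Proof.
split; first exact: k_equal_representation_non_wasteful.
by move=> k _; apply: k_equal_representation_representatively_efficient.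
Qed.
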